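(* For every integer $k\ge0$ there exists a map $f:U_{k+1}\to U_k$ with $\operatorname{dis}(f)=1$.
   Context: For metric spaces $X,Y$ and $a>0$, $X\overset{a}{\sqcup}Y$ is the disjoint union with the original metrics on each part and distance $a$ between points of different parts. The sequence $(U_k)_{k\ge0}$: $U_0$ is a one-point space, $U_1$ is a two-point space with distance $1$, and $U_k=U_{k-2}\overset{k}{\sqcup}U_{k-2}$ for $k>1$. For $f:X\to Y$, $\operatorname{dis}(f)=\sup_{x,x'\in X}|d_X(x,x')-d_Y(f(x),f(x'))|$. *)

From mathcomp Require Import all_boot.
Set Implicit Arguments. Unset Strict Implicit. Unset Printing Implicit Defensive.

(* Carrier of U_k: U_0 = one point, U_1 = two points,
   U_k = U_{k-2} ⊔ U_{k-2} encoded as bool * U_{k-2} (the bool tags the copy). *)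
Fixpoint Ucar (k : nat) : finType :=
  match k with
  | 0 => unit
  | 1 => bool
  | k'.+2 => (bool * Ucar k')%type
  end.

Fixpoint dU (k : nat) : Ucar k -> Ucar k -> nat :=
  match k return Ucar k -> Ucar k -> nat with
  | 0 => fun _ _ => 0
  | 1 => fun x y => if x == y then 0 else 1
  | k'.+2 => fun x y =>
      if x.1 == y.1 then @dU k' x.2 y.2 else k'.+2
  end.

Definition absdiffn (m n : nat) : nat := maxn (m - n) (n - m).

(* distortion of f : U_j -> U_k (supremum over the finite set of pairs = max) *)
Definition dis (j k : nat) (f : Ucar j -> Ucar k) : nat :=
  \max_(x : Ucar j) \max_(x' : Ucar j) absdiffn (@dU j x x') (@dU k (f x) (f x')).

From mathcomp Require Import all_boot.
From mathcomp Require Import zify.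

(* Sending the two copies of U_{k-1} in U_{k+1} = U_{k-1} ⊔ U_{k-1} to the two
   copies of U_{k-2} in U_k, recursively, and at the bottom U_1 to the point
   U_0 and U_2 = U_0 ⊔ U_0 bijectively onto U_1, lowers every nonzero distance
   by exactly one. *)

Fixpoint shrink (k : nat) : Ucar k.+1 -> Ucar k :=
  match k return Ucar k.+1 -> Ucar k with
  | 0 => fun _ => tt
  | 1 => fun x => x.1
  | k'.+2 => fun x => (x.1, shrink k' x.2)
  end.
Arguments shrink {k}.

Fixpoint ubase (k : nat) : Ucar k :=
  match k return Ucar k with
  | 0 => tt
  | 1 => true
  | k'.+2 => (true, ubase k')
  end.

Lemma leq_dis {j k : nat} (f : Ucar j -> Ucar k) (x x' : Ucar j) :
  absdiffn (dU x x') (dU (f x) (f x')) <= dis f.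
Proof.
by apply: (leq_trans _ (leq_bigmax x)); apply: (leq_trans _ (leq_bigmax x')).
Qed.

Lemma dis_leq {j k : nat} (f : Ucar j -> Ucar k) (n : nat) :
  (forall x x', absdiffn (dU x x') (dU (f x) (f x')) <= n) -> dis f <= n.
Proof. by move=> le_fn; apply/bigmax_leqP => x _; apply/bigmax_leqP. Qed.

Lemma dU_shrink {k : nat} (x x' : Ucar k.+1) :
  dU (shrink x) (shrink x') = (dU x x').-1.
Proof.
elim/ltn_ind: k x x' => -[|[|k]] IHk.
- by move=> x x' /=; case: (x == x').
- by move=> [b u] [b' u'] /=; case: (b == b').
- by move=> [b u] [b' u'] /=; case: (b == b') => //; apply: IHk.
Qed.

Theorem claim7 : forall k : nat, exists f : Ucar k.+1 -> Ucar k, dis f = 1.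
Proof.
move=> k; exists shrink; apply/eqP; rewrite eqn_leq; apply/andP; split.
  by apply: dis_leq => x x'; rewrite dU_shrink /absdiffn; lia.
have [x [x' dU_gt0]] : exists x x' : Ucar k.+1, 0 < dU x x'.
  case: k => [|k]; first by exists true, false.
  by exists (true, ubase k), (false, ubase k).
have := leq_dis shrink x x'; rewrite dU_shrink /absdiffn; lia.
Qed.
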